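(* Let $p>2$ be a prime, $n\ge1$, $A$ a finite abelian $p$-group (written additively) and $G$ a group containing $A$ as a normal subgroup with $G/A\cong\mathbb{Z}_{p^n}$, generated by the image of an element $t\in G$. Let $\psi:A\to A$ be $\psi(a)=t^{-1}at$. Suppose $[e]_\varphi$ is a subgroup of $G$ for every $\varphi\in{\rm Aut}\,G$. Then for every $a\in\Omega_1(A)$ one has $(\mathrm{id}+\psi+\psi^2+\dots+\psi^{p^n-1})(a)=0$; equivalently, the assignment $d(\bar t)=a$ extends to a derivation $d:G/A\to A$.
   Context: For an automorphism $\varphi$ of $G$, $[e]_\varphi=\{z^{-1}\varphi(z)\mid z\in G\}$. $\Omega_k(A)=\{a\in A\mid p^k a=0\}$. $G/A$ acts on the abelian normal subgroup $A$ by conjugation, $a^{\bar g}=g^{-1}ag$. A derivation $d:G/A\to A$ is a map with $d(h_1h_2)=d(h_1)+d(h_2)^{h_1}$ for all $h_1,h_2$; for a cyclic group $\langle \bar t\rangle$ of order $p^n$, a value $d(\bar t)=a$ extends to a derivation iff $(\mathrm{id}+\psi+\dots+\psi^{p^n-1})a=0$, in which case $d(\bar t^k)=(\mathrm{id}+\psi+\dots+\psi^{k-1})a$. *)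

From HB Require Import structures.
From mathcomp Require Import all_boot all_order all_fingroup all_solvable.
Set Implicit Arguments. Unset Strict Implicit. Unset Printing Implicit Defensive.

Definition e_class (gT : finGroupType) (G : {set gT}) (phi : {perm gT}) : {set gT} :=
  [set (z^-1 * phi z)%g | z in G].

From HB Require Import structures.
From mathcomp Require Import all_boot all_order all_fingroup all_solvable.
Set Implicit Arguments. Unset Strict Implicit. Unset Printing Implicit Defensive.
Local Open Scope group_scope.

(* Write f for conjugation by t. As G = <t>A with A abelian, the G-class of a is
   the f-orbit of a; its length m divides p^n, and a, f a, ..., f^(p^n-1) a runs
   p^n/m times through it. For the inner automorphism phi of G induced by a,
   [e]_phi = { x^-1 a | x in a^G } is a subgroup of A, so abelian of odd order,
   and the product of its elements is 1. Hence the orbit multiplies to a^m and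
   the required product is (a^m)^(p^n/m) = a^(p^n) = 1. *)

Section MonoidProducts.
Variable M : monoidType.

Lemma perm_prod_commute (I : eqType) (r1 r2 : seq I) (F : I -> M) :
    {in r1 &, forall i j, commute (F i) (F j)} -> perm_eq r1 r2 ->
  \prod_(i <- r1) F i = \prod_(i <- r2) F i.
Proof.
elim: r1 r2 => [|x r1 IH] r2 cF eq_r.
  by move: eq_r; rewrite perm_sym => /perm_nilP ->.
have x_r2 : x \in r2 by rewrite -(perm_mem eq_r) mem_head.
move: eq_r; case/splitPr: x_r2 => r2a r2b.
rewrite perm_sym -cat1s (perm_catCA r2a [:: x]) perm_cons perm_sym => eq_r.
have cFx : commute (F x) (\prod_(i <- r2a) F i).
  rewrite big_seq; apply: commute_prod => i i_r2a; apply: cF; first exact: mem_head.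
  by rewrite in_cons (perm_mem eq_r) mem_cat i_r2a orbT.
rewrite big_cons big_cat big_cons /= mulgA -cFx -mulgA -big_cat.
congr (_ * _); apply: IH eq_r => i j ir jr.
by apply: cF; rewrite in_cons ?ir ?jr orbT.
Qed.

Lemma prod_traject (f : M -> M) x n :
  \prod_(y <- traject f x n) y = \prod_(i < n) iter i f x.
Proof.
elim: n => [|n IH]; first by rewrite big_nil big_ord0.
by rewrite trajectSr big_rcons IH big_ord_recr.
Qed.

Lemma prod_flatten_nseq k (s : seq M) :
  \prod_(y <- flatten (nseq k s)) y = (\prod_(y <- s) y) ^+ k.
Proof. by rewrite big_flatten big_nseq iter_mulg_1. Qed.

End MonoidProducts.

Lemma prod_abelian_odd (gT : finGroupType) (H : {group gT}) :
  abelian H -> odd #|H| -> \prod_(x in H) x = 1.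
Proof.
move=> cHH oddH; set Q := \prod_(x in H) x.
set r := [seq x <- index_enum gT | x \in H].
have mem_r x : (x \in r) = (x \in H) by rewrite mem_filter mem_index_enum andbT.
have uniq_r : uniq r by rewrite filter_uniq ?index_enum_uniq.
have cH : {in r &, forall x y, commute x y}.
  by move=> x y; rewrite !mem_r => xH yH; apply: (centsP cHH).
have QV : Q^-1 = Q.
  have inv_r : perm_eq [seq x^-1 | x <- r] r.
    apply: uniq_perm; rewrite ?map_inj_uniq //; first exact: invg_inj.
    by move=> x; rewrite -[x in LHS]invgK (mem_map invg_inj) !mem_r groupV.
  have rev_r : perm_eq r (rev r) by rewrite perm_sym perm_rev.
  rewrite /Q -big_filter -/r {1}(perm_prod_commute cH rev_r) -prodgV.
  rewrite -(big_map (fun x => x^-1) xpredT id) (perm_prod_commute _ inv_r) //.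
  by move=> x y /mapP[u uH ->] /mapP[v vH ->]; apply/commuteV/commute_sym/commuteV/cH.
have Q2 : Q ^+ 2 = 1 by rewrite expg2 -{1}QV mulVg.
have : #[Q] %| gcdn 2 #|H|.
  by rewrite dvdn_gcd order_dvdn Q2 eqxx order_dvdG //; apply: group_prod.
by rewrite (eqnP (_ : coprime 2 #|H|)) ?coprime2n // dvdn1 order_eq1 => /eqP.
Qed.

Lemma cycle_traject (T : eqType) (f : T -> T) x n :
  iter n.+1 f x = x -> fcycle f (traject f x n.+1).
Proof.
move=> fx; rewrite trajectS /= rcons_path fpath_traject last_traject.
by rewrite /= -iterS fx.
Qed.

Section OrbitPeriod.
Variables (T : finType) (f : T -> T).

Lemma traject_iter_id x n : iter n f x = x ->
  traject f x n = flatten (nseq (n %/ fingraph.order f x) (fingraph.orbit f x)).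
Proof.
case: n => [|n] fx; first by rewrite div0n.
have [k def_tr] := fcycleEflatten (cycle_traject fx).
have undup_tr : undup (traject f x n.+1) = fingraph.orbit f x.
  exact: undup_cycle_cons (cycle_traject fx).
rewrite undup_tr in def_tr; rewrite {1}def_tr; congr (flatten (nseq _ _)).
have := congr1 size def_tr; rewrite size_traject size_flatten /shape map_nseq.
by rewrite sumn_nseq size_orbit => ->; rewrite mulnC mulnK ?fingraph.order_gt0.
Qed.

Lemma order_dvdn_iter_id x n : iter n f x = x -> fingraph.order f x %| n.
Proof.
move=> /traject_iter_id /(congr1 size); rewrite size_traject size_flatten.
by rewrite /shape map_nseq sumn_nseq size_orbit => ->; apply: dvdn_mulr.
Qed.
End OrbitPeriod.

Lemma iter_conjg (gT : finGroupType) (x t : gT) k :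
  iter k (conjg^~ t) x = x ^ (t ^+ k).
Proof. by elim: k => [|k IH]; rewrite ?conjg1 //= IH expgSr conjgM. Qed.

Lemma e_class_conj_aut (gT : finGroupType) (G : {group gT}) a : a \in G ->
  e_class G (conj_aut G a) = [set x^-1 * a | x in a ^: G].
Proof.
move=> aG; rewrite /e_class -imset_comp; apply: eq_in_imset => z zG /=.
by rewrite conj_autE // !conjgE !invMg invgK !mulgA.
Qed.

Section CyclicQuotient.
Variables (gT : finGroupType) (G A : {group gT}) (t : gT).
Hypotheses (nsAG : A <| G) (cAA : abelian A) (tG : t \in G).
Hypothesis quoG : G / A = <[coset A t]>.

Lemma class_orbit_conjg a : a \in A -> a ^: G =i fingraph.orbit (conjg^~ t) a.
Proof.
move=> aA x; rewrite -fconnect_orbit; apply/imsetP/idP => [[z zG ->] | a_x].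
  have nAz : z \in 'N(A) := subsetP (normal_norm nsAG) z zG.
  have nAt : t \in 'N(A) := subsetP (normal_norm nsAG) t tG.
  have : coset A z \in <[coset A t]> by rewrite -quoG mem_quotient.
  case/cycleP => i; rewrite -morphX // => /(rcoset_kercosetP nAz (groupX i nAt)).
  case/rcosetP => b bA ->; rewrite conjgM -iter_conjg (conjg_fixP _) ?fconnect_iter //.
  by apply/commgP/(centsP cAA).
exists (t ^+ findex (conjg^~ t) a x); first exact: groupX.
by rewrite -iter_conjg iter_findex.
Qed.

Hypothesis oddA : odd #|A|.
Hypothesis e_class_group :
  forall phi : {perm gT}, phi \in Aut G -> group_set (e_class G phi).

Lemma prod_orbit_conjg a : a \in A ->
  \prod_(x <- fingraph.orbit (conjg^~ t) a) x = a ^+ fingraph.order (conjg^~ t) a.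
Proof.
move=> aA; set s := fingraph.orbit _ a; pose h x := x^-1 * a.
have aG : a \in G := subsetP (normal_sub nsAG) a aA.
have sA x : x \in s -> x \in A.
  rewrite -class_orbit_conjg // => /imsetP[z zG ->].
  by rewrite memJ_norm // (subsetP (normal_norm nsAG)).
have hA x : x \in s -> h x \in A by move=> xs; rewrite groupM ?groupV // sA.
have conj_autG : conj_aut G a \in Aut G by apply: Aut_aut.
pose E := Group (e_class_group conj_autG).
have sEA : E \subset A.
  apply/subsetP=> y; rewrite /= e_class_conj_aut // => /imsetP[x xaG ->].
  by apply: hA; rewrite -class_orbit_conjg.
have prod_h : \prod_(x <- s) h x = 1.
  have hs_E : perm_eq (map h s) [seq y <- index_enum gT | y \in E].
    apply: uniq_perm; rewrite ?filter_uniq ?index_enum_uniq //.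
      by rewrite map_inj_uniq ?orbit_uniq // => x y /mulIg/invg_inj.
    move=> y; rewrite mem_filter mem_index_enum andbT /= e_class_conj_aut //.
    by apply/mapP/imsetP => -[x xs ->]; exists x; rewrite ?class_orbit_conjg in xs *.
  rewrite -(big_map h xpredT id) (perm_prod_commute _ hs_E) ?big_filter.
    by apply: prod_abelian_odd; rewrite ?(abelianS sEA) ?(dvdn_odd (cardSg sEA)).
  by move=> x y /mapP[u us ->] /mapP[v vs ->]; apply: (centsP cAA); apply: hA.
have prod_split : \prod_(x <- s) (x * h x) = \prod_(x <- s) x * \prod_(x <- s) h x.
  rewrite !big_seq; apply: prodgM_commute => x y xs ys.
  by apply: (centsP cAA); [apply: sA | apply: hA].
rewrite -size_orbit -/s -iter_mulg_1 -count_predT -big_const_seq.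
by rewrite -(eq_bigr _ (fun x _ => mulKVg x a)) prod_split prod_h mulg1.
Qed.
End CyclicQuotient.

Theorem mainTheorem10 (gT : finGroupType) (G A : {group gT}) (t : gT) (p n : nat) :
  prime p -> 2 < p -> 0 < n ->
  A <| G -> abelian A -> p.-group A ->
  t \in G ->
  G / A = <[coset A t]> -> #[coset A t] = (p ^ n)%N ->
  (forall phi : {perm gT}, phi \in Aut G -> group_set (e_class G phi)) ->
  forall a, a \in A -> a ^+ p = 1 ->
    \prod_(i < p ^ n) (a ^ (t ^+ i)) = 1.
Proof.
move=> pr_p p_gt2 n_gt0 nsAG cAA pA tG quoG ord_t e_class_group a aA ap.
have oddA : odd #|A|.
  have [k ->] := p_natP pA; rewrite oddX orbC.
  by case: (even_prime pr_p) => [p2 | ->] //; rewrite p2 in p_gt2.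
have tNA : t ^+ (p ^ n) \in A.
  have nAt : t \in 'N(A) := subsetP (normal_norm nsAG) t tG.
  by apply: coset_idr; rewrite ?groupX // morphX // -ord_t expg_order.
have period : iter (p ^ n) (conjg^~ t) a = a.
  by rewrite iter_conjg; apply/conjg_fixP/commgP/(centsP cAA).
under eq_bigr do rewrite -iter_conjg.
rewrite -prod_traject traject_iter_id // prod_flatten_nseq.
rewrite (prod_orbit_conjg nsAG cAA tG quoG oddA e_class_group aA).
rewrite -expgM mulnC divnK ?order_dvdn_iter_id //.
by rewrite -(prednK n_gt0) expnS expgM ap expg1n.
Qed.
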